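(* $\mathbf{FO}(\sim,=\!(\cdot))=\mathbf{FO}(\sim,\neq\!(\cdot))=\mathbf{FO}(\sim,=\!(\cdot,\cdot))=\mathbf{FO}(=\!(\cdot,\cdot),\sim)$ (team logic).
   Context: Team semantics (lax version). For a structure $\mathfrak M$ with domain $M$, a team $X$ is a (possibly empty) set of assignments $s:V\to M$, $V$ a finite set of variables. Satisfaction: first-order literal $\alpha$: every $s\in X$ satisfies $\alpha$ (Tarski); $\psi\vee\theta$: $X=Y\cup Z$ with $\mathfrak M\models_Y\psi$, $\mathfrak M\models_Z\theta$; $\psi\wedge\theta$: both; $\exists v\psi$: some $F:X\to\mathcal P(M)\setminus\{\emptyset\}$ with $\mathfrak M\models_{X[F/v]}\psi$, $X[F/v]=\{s[m/v]:s\in X,m\in F(s)\}$; $\forall v\psi$: $\mathfrak M\models_{X[M/v]}\psi$, $X[M/v]=\{s[m/v]:s\in X,m\in M\}$; contradictory negation $\mathfrak M\models_X\sim\phi$ iff $\mathfrak M\not\models_X\phi$. Atoms (all arities): constancy $\mathfrak M\models_X=\!(\vec v)$ iff $s(\vec v)=s'(\vec v)$ for all $s,s'\in X$; inconstancy $\mathfrak M\models_X\neq\!(\vec v)$ iff there are $s,s'\in X$ with $s(\vec v)\ne s'(\vec v)$; functional dependence $\mathfrak M\models_X=\!(\vec v,\vec w)$ iff for all $s,s'\in X$, $s(\vec v)=s'(\vec v)$ implies $s(\vec w)=s'(\vec w)$. $\mathbf{FO}(\ldots)$ is first-order logic extended with the listed atoms/operators; team logic is $\mathbf{FO}(=\!(\cdot,\cdot),\sim)$.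 Two logics are equal if every formula of each is equivalent (satisfied by the same teams in all structures) to some formula of the other. *)

From mathcomp Require Import all_boot.
Set Implicit Arguments.
Unset Strict Implicit.
Unset Printing Implicit Defensive.

(* First-order signature: function and relation symbols with arities.
   Constants are 0-ary function symbols. *)
Record signature := Signature {
  fsym : Type; farity : fsym -> nat;
  rsym : Type; rarity : rsym -> nat }.

Section Syntax.
Variable S : signature.

Inductive term : Type :=
| TVar (v : nat)
| TApp (f : fsym S) (args : 'I_(farity f) -> term).

Inductive literal : Type :=
| LEq (t1 t2 : term)
| LNeq (t1 t2 : term)
| LRel (r : rsym S) (args : 'I_(rarity r) -> term)
| LNRel (r : rsym S) (args : 'I_(rarity r) -> term).

(* Formulas of FO extended with ~, constancy, inconstancy and dependence
   atoms (negation normal form for first-order negation; ~ is the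
   contradictory negation). *)
Inductive formula : Type :=
| FLit (a : literal)
| FAnd (p q : formula)
| FOr (p q : formula)
| FEx (v : nat) (p : formula)
| FAll (v : nat) (p : formula)
| FTilde (p : formula)
| FConst (vs : seq nat)
| FIncons (vs : seq nat)
| FDep (vs ws : seq nat).

Record structure := Structure {
  carrier :> Type;
  finterp : forall f : fsym S, ('I_(farity f) -> carrier) -> carrier;
  rinterp : forall r : rsym S, ('I_(rarity r) -> carrier) -> Prop }.

Variable M : structure.

(* Assignments are total maps from variables to M; the values outside the
   relevant finite domain are irrelevant (locality of lax semantics). *)
Definition assignment := nat -> carrier M.
Definition team := assignment -> Prop.

Fixpoint teval (s : assignment) (t : term) : carrier M :=
  match t with
  | TVar v => s v
  | TApp f a => @finterp M f (fun i => teval s (a i))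
  end.

Definition lit_sat (s : assignment) (a : literal) : Prop :=
  match a with
  | LEq t1 t2 => teval s t1 = teval s t2
  | LNeq t1 t2 => teval s t1 <> teval s t2
  | LRel r args => @rinterp M r (fun i => teval s (args i))
  | LNRel r args => ~ @rinterp M r (fun i => teval s (args i))
  end.

Definition upd (s : assignment) (v : nat) (m : carrier M) : assignment :=
  fun x => if x == v then m else s x.

Definition supp_team (X : team) (F : assignment -> carrier M -> Prop) (v : nat)
  : team :=
  fun t => exists s m, X s /\ F s m /\ forall x, t x = upd s v m x.

Definition dupl_team (X : team) (v : nat) : team :=
  fun t => exists s m, X s /\ forall x, t x = upd s v m x.

Definition vals (s : assignment) (vs : seq nat) : seq (carrier M) := map s vs.

Fixpoint sat (p : formula) (X : team) : Prop :=
  match p with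
  | FLit a => forall s, X s -> lit_sat s a
  | FAnd p q => sat p X /\ sat q X
  | FOr p q => exists Y Z : team,
      (forall s, X s <-> (Y s \/ Z s)) /\ sat p Y /\ sat q Z
  | FEx v p => exists F : assignment -> carrier M -> Prop,
      (forall s, X s -> exists m, F s m) /\ sat p (supp_team X F v)
  | FAll v p => sat p (dupl_team X v)
  | FTilde p => ~ sat p X
  | FConst vs => forall s s', X s -> X s' -> vals s vs = vals s' vs
  | FIncons vs => exists s s', X s /\ X s' /\ vals s vs <> vals s' vs
  | FDep vs ws => forall s s', X s -> X s' ->
      vals s vs = vals s' vs -> vals s ws = vals s' ws
  end.

End Syntax.

Arguments FLit {S}. Arguments FConst {S}. Arguments FIncons {S}.
Arguments FDep {S}.

Inductive atom_kind := KConst | KIncons | KDep.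

Fixpoint uses_only (S : signature) (ok : atom_kind -> bool) (p : formula S)
  : bool :=
  match p with
  | FLit _ => true
  | FAnd p q | FOr p q => uses_only ok p && uses_only ok q
  | FEx _ p | FAll _ p | FTilde p => uses_only ok p
  | FConst _ => ok KConst
  | FIncons _ => ok KIncons
  | FDep _ _ => ok KDep
  end.

Definition FO_tilde_const (S : signature) (p : formula S) : Prop :=
  uses_only (fun k => if k is KConst then true else false) p.
Definition FO_tilde_incons (S : signature) (p : formula S) : Prop :=
  uses_only (fun k => if k is KIncons then true else false) p.
Definition FO_tilde_dep (S : signature) (p : formula S) : Prop :=
  uses_only (fun k => if k is KDep then true else false) p.
(* Team logic FO(=(.,.), ~): same syntax as FO(~, =(.,.)). *)
Definition team_logic (S : signature) (p : formula S) : Prop :=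
  uses_only (fun k => if k is KDep then true else false) p.

Definition equivalent (S : signature) (p q : formula S) : Prop :=
  forall (M : structure S), inhabited (carrier M) ->
    forall X : team M, sat p X <-> sat q X.

Definition logic_eq (S : signature) (L1 L2 : formula S -> Prop) : Prop :=
  (forall p, L1 p -> exists q, L2 q /\ equivalent p q) /\
  (forall q, L2 q -> exists p, L1 p /\ equivalent q p).

(** Each atom is definable from each other in the presence of [~]:
    constancy and inconstancy are each other's contradictory negation,
    constancy is dependence on no variables, and [=(vs, ws)] fails exactly
    when some subteam is constant on [vs] but inconstant on [ws]; "some
    subteam satisfies [p]" is the lax disjunction of [p] with a tautology.
    Replacing atoms by their definitions inside a formula preserves its
    meaning, since satisfaction is compositional. *)
From mathcomp Require Import all_boot.
From Stdlib Require Import Classical.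

Section AtomSubstitution.
Variable S : signature.
Variables (fc fi : seq nat -> formula S) (fd : seq nat -> seq nat -> formula S).

Fixpoint subst_atoms (p : formula S) : formula S :=
  match p with
  | FLit a => FLit a
  | FAnd p q => FAnd (subst_atoms p) (subst_atoms q)
  | FOr p q => FOr (subst_atoms p) (subst_atoms q)
  | FEx v p => FEx v (subst_atoms p)
  | FAll v p => FAll v (subst_atoms p)
  | FTilde p => FTilde (subst_atoms p)
  | FConst vs => fc vs
  | FIncons vs => fi vs
  | FDep vs ws => fd vs ws
  end.

Lemma sat_subst_atoms (M : structure S) :
  (forall vs (X : team M), sat (fc vs) X <-> sat (FConst vs) X) ->
  (forall vs (X : team M), sat (fi vs) X <-> sat (FIncons vs) X) ->
  (forall vs ws (X : team M), sat (fd vs ws) X <-> sat (FDep vs ws) X) ->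
  forall p (X : team M), sat (subst_atoms p) X <-> sat p X.
Proof.
move=> Hc Hi Hd; elim=> [a|p IHp q IHq|p IHp q IHq|v p IHp|v p IHp|p IHp|vs|vs|vs ws] X /=.
- by [].
- by rewrite IHp IHq.
- by split=> -[Y [Z [HX [Hp Hq]]]]; exists Y, Z; rewrite ?IHp ?IHq in Hp Hq *.
- by split=> -[F [HF Hp]]; exists F; rewrite ?IHp in Hp *.
- by rewrite IHp.
- by rewrite IHp.
- exact: Hc.
- exact: Hi.
- exact: Hd.
Qed.

Lemma uses_only_subst_atoms {ok ok' : atom_kind -> bool} :
  (forall vs, ok KConst -> uses_only ok' (fc vs)) ->
  (forall vs, ok KIncons -> uses_only ok' (fi vs)) ->
  (forall vs ws, ok KDep -> uses_only ok' (fd vs ws)) ->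
  forall p, uses_only ok p -> uses_only ok' (subst_atoms p).
Proof.
move=> Hc Hi Hd; elim=> [a|p IHp q IHq|p IHp q IHq|v p IHp|v p IHp|p IHp|vs|vs|vs ws] //=.
- by move=> /andP[/IHp -> /IHq ->].
- by move=> /andP[/IHp -> /IHq ->].
- exact: Hc.
- exact: Hi.
- exact: Hd.
Qed.

Lemma translate_by_subst_atoms {ok ok' : atom_kind -> bool} :
  (forall vs, ok KConst -> uses_only ok' (fc vs)) ->
  (forall vs, ok KIncons -> uses_only ok' (fi vs)) ->
  (forall vs ws, ok KDep -> uses_only ok' (fd vs ws)) ->
  (forall (M : structure S) vs (X : team M), sat (fc vs) X <-> sat (FConst vs) X) ->
  (forall (M : structure S) vs (X : team M), sat (fi vs) X <-> sat (FIncons vs) X) ->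
  (forall (M : structure S) vs ws (X : team M),
     sat (fd vs ws) X <-> sat (FDep vs ws) X) ->
  forall p : formula S, uses_only ok p ->
    exists q, uses_only ok' q /\ equivalent p q.
Proof.
move=> Uc Ui Ud Ec Ei Ed p Hp; exists (subst_atoms p); split.
  exact: (uses_only_subst_atoms Uc Ui Ud _ Hp).
by move=> M _ X; symmetry; apply: sat_subst_atoms.
Qed.

End AtomSubstitution.

Section AtomDefinability.
Variables (S : signature) (M : structure S).

Lemma sat_tilde_incons vs (X : team M) :
  sat (FTilde (FIncons vs)) X <-> sat (FConst vs) X.
Proof.
split=> /= [Hn s s' Hs Hs'|Hc [s [s' [Hs [Hs' Hne]]]]]; last exact: Hne (Hc s s' Hs Hs').
by apply: NNPP => Hne; apply: Hn; exists s, s'.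
Qed.

Lemma sat_tilde_const vs (X : team M) :
  sat (FTilde (FConst vs)) X <-> sat (FIncons vs) X.
Proof.
split=> /= [Hn|[s [s' [Hs [Hs' Hne]]]] Hc]; last exact: Hne (Hc s s' Hs Hs').
apply: NNPP => Hni; apply: Hn => s s' Hs Hs'.
by apply: NNPP => Hne; apply: Hni; exists s, s'.
Qed.

Lemma sat_tilde_dep_nil vs (X : team M) :
  sat (FTilde (FDep [::] vs)) X <-> sat (FIncons vs) X.
Proof.
rewrite -sat_tilde_const /=.
by split=> Hn Hc; apply: Hn => s s' Hs Hs'; [move=> _|]; apply: Hc.
Qed.

Definition top : formula S := FLit (LEq (@TVar S 0) (@TVar S 0)).

Lemma sat_or_top p (X : team M) :
  sat (FOr p top) X <-> exists2 Y : team M, (forall s, Y s -> X s) & sat p Y.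
Proof.
split=> [[Y [Z [HX [Hp _]]]]|[Y HYX Hp]].
  by exists Y => // s Ys; apply/HX; left.
exists Y, X; split=> [s|]; last by split.
by split=> [|[/HYX|]]; [right|..].
Qed.

Definition dep_by_incons (vs ws : seq nat) : formula S :=
  FTilde (FOr (FAnd (FTilde (FIncons vs)) (FIncons ws)) top).

Lemma sat_dep_by_incons vs ws (X : team M) :
  sat (dep_by_incons vs ws) X <-> sat (FDep vs ws) X.
Proof.
rewrite -[sat (dep_by_incons _ _) _]/(~ sat (FOr (FAnd (FTilde (FIncons vs)) (FIncons ws)) top) X).
rewrite sat_or_top.
split=> [Hn s s' Hs Hs' Hv|Hd [Y HYX [/sat_tilde_incons Hc]]].
- apply: NNPP => Hw; apply: Hn.
  exists (fun t => t = s \/ t = s'); first by move=> t [->|->].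
  split; last by exists s, s'; split; [left|split; [right|]].
  by apply/sat_tilde_incons => t t' [->|->] [->|->].
- by move=> [s [s' [Hs [Hs' Hne]]]]; apply: Hne; apply: Hd; auto.
Qed.

End AtomDefinability.

Theorem mainTheorem16 (S : signature) :
  logic_eq (@FO_tilde_const S) (@FO_tilde_incons S) /\
  logic_eq (@FO_tilde_incons S) (@FO_tilde_dep S) /\
  logic_eq (@FO_tilde_dep S) (@team_logic S).
Proof.
split; [|split]; last by split=> p Hp; exists p.
- split.
  + apply: (@translate_by_subst_atoms S (fun vs => FTilde (FIncons vs)) FIncons FDep) => //.
    exact: sat_tilde_incons.
  + apply: (@translate_by_subst_atoms S FConst (fun vs => FTilde (FConst vs)) FDep) => //.
    exact: sat_tilde_const.
- split.
  + apply: (@translate_by_subst_atoms S FConst (fun vs => FTilde (FDep [::] vs)) FDep) => //.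
    exact: sat_tilde_dep_nil.
  + apply: (@translate_by_subst_atoms S FConst FIncons (@dep_by_incons S)) => //.
    exact: sat_dep_by_incons.
Qed.
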